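(* Let $(X,d)$ be a compact metric space, $\omega:\Lambda\times X\to X$ an $\eta$-expansive IFS, and $\sigma=(\lambda_1,\lambda_2,\dots)\in\Lambda^{\mathbb N}$. Then for every $\mu>0$ there exists $N>0$ such that if $x,y\in X$ satisfy $d(\omega_{\sigma_n}(x),\omega_{\sigma_n}(y))\le\eta$ for all $n\le N$, then $d(x,y)<\mu$.
   Context: An IFS is given by a compact metric space $\Lambda$ and a continuous map $\omega:\Lambda\times X\to X$; $\omega_\lambda=\omega(\lambda,\cdot)$. For $\sigma=(\lambda_1,\lambda_2,\dots)$, $\omega_{\sigma_0}=\mathrm{id}$, $\omega_{\sigma_k}=\omega_{\lambda_k}\circ\cdots\circ\omega_{\lambda_1}$. $\eta$-expansive: for every $\sigma\in\Lambda^{\mathbb N}$, if $x,y\in X$ satisfy $d(\omega_{\sigma_n}(x),\omega_{\sigma_n}(y))\le\eta$ for all $n\in\mathbb N$, then $x=y$. *)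

From HB Require Import structures.
From mathcomp Require Import all_boot all_order all_algebra.
From mathcomp Require Import all_classical all_reals all_analysis.
Set Implicit Arguments. Unset Strict Implicit. Unset Printing Implicit Defensive.
Import Order.TTheory GRing.Theory Num.Theory.
Local Open Scope classical_set_scope.
Local Open Scope ring_scope.

(* The sequence sigma = (lambda_1, lambda_2, ...) is encoded as
   sig : nat -> Lambda with lambda_{k+1} = sig k.
   omega_seq omega sig n = omega_{sigma_n}
     = omega_{lambda_n} o ... o omega_{lambda_1}, omega_seq _ _ 0 = id. *)
Fixpoint omega_seq {L X : Type} (omega : L -> X -> X) (sig : nat -> L) (n : nat)
  : X -> X :=
  match n with
  | 0 => id
  | n.+1 => fun x => omega (sig n) (omega_seq omega sig n x)
  end.

Definition IFS {R : realType} {L X : metricType R} (omega : L -> X -> X) : Prop :=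
  compact [set: L] /\ continuous (fun p : L * X => omega p.1 p.2).

Definition expansive {R : realType} {L X : metricType R}
  (omega : L -> X -> X) (eta : R) : Prop :=
  forall (sig : nat -> L) (x y : X),
    (forall n : nat, mdist (omega_seq omega sig n x) (omega_seq omega sig n y) <= eta) ->
    x = y.

(* Suppose no N works for some mu > 0.  Then for every N the set of pairs
   (x, y) with d(x, y) >= mu whose orbits stay eta-close up to time N is
   non-empty; these sets are closed (the maps omega_{sigma_n} are continuous)
   and decrease with N, so by compactness of X * X they have a common point.
   Its two coordinates stay eta-close along the whole orbit, hence coincide by
   expansiveness, contradicting d(x, y) >= mu. *)
From HB Require Import structures.
From mathcomp Require Import all_boot all_order all_algebra.
From mathcomp Require Import all_classical all_reals all_analysis.
From mathcomp Require Import lra.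
Set Implicit Arguments. Unset Strict Implicit. Unset Printing Implicit Defensive.
Import Order.TTheory GRing.Theory Num.Theory numFieldNormedType.Exports.
Local Open Scope classical_set_scope.
Local Open Scope ring_scope.

Lemma omega_seq_continuous (L X : topologicalType) (omega : L -> X -> X)
    (sig : nat -> L) :
  continuous (fun p : L * X => omega p.1 p.2) ->
  forall n, continuous (omega_seq omega sig n).
Proof.
move=> omega_cont; elim=> [|n IHn] x /=; first exact: cvg_id.
apply: (continuous_comp (f := fun x => (sig n, omega_seq omega sig n x))
          (g := fun p : L * X => omega p.1 p.2)); last exact: omega_cont.
exact: cvg_pair (cvg_cst _) (IHn x).
Qed.

Lemma mdist_continuous (R : realType) (X : metricType R) :
  continuous (fun p : X * X => mdist p.1 p.2 : R).
Proof.
move=> [x y]; apply/cvgrPdist_lt => e e0 /=.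
have e20 : 0 < e / 2 by rewrite divr_gt0.
have fst_cvg : fst @ (x, y) --> x by exact: cvg_fst.
have snd_cvg : snd @ (x, y) --> y by exact: cvg_snd.
near=> p.
have dx : mdist x p.1 < e / 2.
  by near: p; exact: metricType_numDomainType.cvgr_dist_lt fst_cvg _ e20.
have dy : mdist y p.2 < e / 2.
  by near: p; exact: metricType_numDomainType.cvgr_dist_lt snd_cvg _ e20.
have := metric_triangle x p.1 y; have := metric_triangle p.1 p.2 y.
have := metric_triangle p.1 x p.2; have := metric_triangle x y p.2.
rewrite (metric_sym p.1 x) (metric_sym p.2 y) ltr_distlC; lra.
Unshelve. all: by end_near.
Qed.

Lemma mdist_map_continuous (R : realType) (Y : topologicalType)
    (X : metricType R) (f : Y -> X) :
  continuous f -> continuous (fun p : Y * Y => mdist (f p.1) (f p.2) : R).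
Proof.
move=> f_cont p.
apply: (continuous_comp (f := fun p : Y * Y => (f p.1, f p.2))
          (g := fun q : X * X => mdist q.1 q.2 : R)); last exact: mdist_continuous.
apply: cvg_pair.
- by apply: (continuous_comp (f := fst)); [exact: cvg_fst | exact: f_cont].
- by apply: (continuous_comp (f := snd)); [exact: cvg_snd | exact: f_cont].
Qed.

Lemma closed_mdist_le (R : realType) (Y : topologicalType) (X : metricType R)
    (f : Y -> X) (r : R) :
  continuous f -> closed [set p : Y * Y | mdist (f p.1) (f p.2) <= r].
Proof.
move=> /mdist_map_continuous f_cont.
exact: (preimage_closed (D := [set x : R | x <= r]) (fun p _ => f_cont p)
                        (@closed_le _ r)).
Qed.

Lemma closed_mdist_ge (R : realType) (Y : topologicalType) (X : metricType R)
    (f : Y -> X) (r : R) :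
  continuous f -> closed [set p : Y * Y | r <= mdist (f p.1) (f p.2)].
Proof.
move=> /mdist_map_continuous f_cont.
exact: (preimage_closed (D := [set x : R | r <= x]) (fun p _ => f_cont p)
                        (@closed_ge _ r)).
Qed.

Lemma compact_nonincreasing_bigcap (T : topologicalType) (K : nat -> set T) :
  compact [set: T] -> (forall n, closed (K n)) ->
  (forall m n, (m <= n)%N -> K n `<=` K m) -> (forall n, K n !=set0) ->
  \bigcap_n K n !=set0.
Proof.
move=> T_compact K_closed K_noninc K_neq0.
have [p pK] := choice K_neq0.
have [c [_ c_cluster]] := T_compact (p @ \oo) _ filterT.
exists c => N _.
have p_evK : (p @ \oo) (K N).
  by exists N => // n /= Nn; exact: K_noninc Nn _ (pK n).
rewrite ((closure_id _).1 (K_closed N)).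
by rewrite clusterE in c_cluster; exact: c_cluster _ p_evK.
Qed.

Theorem mainTheorem10 (R : realType) (L X : metricType R)
  (omega : L -> X -> X) (eta : R) (sig : nat -> L) :
  compact [set: X] -> IFS omega -> expansive omega eta ->
  forall mu : R, 0 < mu ->
  exists N : nat, (0 < N)%N /\
    forall x y : X,
      (forall n : nat, (n <= N)%N ->
         mdist (omega_seq omega sig n x) (omega_seq omega sig n y) <= eta) ->
      mdist x y < mu.
Proof.
move=> X_compact [_ omega_cont] omega_expansive mu mu_gt0.
pose K N := [set p : X * X | mu <= mdist p.1 p.2] `&`
  \bigcap_(n in [set n | (n <= N)%N])
    [set p | mdist (omega_seq omega sig n p.1) (omega_seq omega sig n p.2) <= eta].
have XX_compact : compact [set: X * X] by rewrite -setXTT; exact: compact_setX.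
have K_closed N : closed (K N).
  apply: closedI; first exact: (@closed_mdist_ge _ _ _ id mu (fun _ => cvg_id)).
  apply: closed_bigI => n _.
  exact: (@closed_mdist_le _ _ _ (omega_seq omega sig n) eta
            (@omega_seq_continuous _ _ _ sig omega_cont n)).
have K_noninc m n : (m <= n)%N -> K n `<=` K m.
  move=> mn p [mu_p orbit_p]; split=> // k /= km.
  by apply: orbit_p; exact: leq_trans mn.
apply: contrapT => no_N.
have K_neq0 N : K N !=set0.
  apply: contrapT => K_eq0; apply: no_N; exists N.+1; split=> // x y orbit_xy.
  rewrite ltNge; apply/negP => mu_xy; apply: K_eq0; exists (x, y).
  by split=> // n /= nN; exact: orbit_xy (leqW nN).
have [c Kc] := compact_nonincreasing_bigcap XX_compact K_closed K_noninc K_neq0.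
have c12 : c.1 = c.2.
  by apply: (omega_expansive sig) => n; exact: (Kc n I).2 n (leqnn n).
by have := (Kc 0%N I).1; rewrite /= c12 mdistxx; lra.
Qed.
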